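(* Let $\mathsf{k}$ be algebraically closed and $\mathsf{P}=(p_{abc})\in\mathsf{k}^8$. The quadratic Jordan algebra $J_{\mathsf{P}}$ defined below is nondegenerate if and only if $D_{\mathscr{H}}(\mathsf{P})\neq0$, where $D_{\mathscr{H}}(\mathsf{P})=p_{111}^2p_{222}^2+p_{112}^2p_{221}^2+p_{121}^2p_{212}^2+p_{122}^2p_{211}^2-2(p_{111}p_{122}p_{211}p_{222}+p_{111}p_{121}p_{212}p_{222}+p_{111}p_{112}p_{221}p_{222}+p_{121}p_{122}p_{211}p_{212}+p_{112}p_{122}p_{211}p_{221}+p_{112}p_{121}p_{212}p_{221})+4(p_{111}p_{122}p_{212}p_{221}+p_{112}p_{121}p_{211}p_{222})$ (Cayley's hyperdeterminant).
   Context: Let $J=\mathsf{k}^9$ with coordinates $u_1,u_2,u_3,x_{ij}$ ($i\in\{1,2\},j\in\{1,2,3\}$); write $\bm{x}_j=(x_{1j},x_{2j})^t$. With the fixed constants $p_{abc}$, put $D^{(1)}_{ij}(x)=p_{1ij}x_{21}-p_{2ij}x_{11}$, $D^{(2)}_{ij}(x)=p_{i1j}x_{22}-p_{i2j}x_{12}$, $D^{(3)}_{ij}(x)=p_{ij1}x_{23}-p_{ij2}x_{13}$ and $D^{(k)}(x)$ the matrix with rows $(-D^{(k)}_{12}(x),D^{(k)}_{11}(x))$, $(-D^{(k)}_{22}(x),D^{(k)}_{21}(x))$; $M^\dagger$ denotes adjugate. Define $\sigma\mapsto\sigma^\sharp$ by $\bm{x}_1^\sharp=-u_1\bm{x}_1+D^{(3)}(x)\bm{x}_2$,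 $\bm{x}_2^\sharp=-u_2\bm{x}_2+D^{(1)}(x)\bm{x}_3$, $\bm{x}_3^\sharp=-u_3\bm{x}_3-D^{(2)}(x)^\dagger\bm{x}_1$, $u_1^\sharp=u_2u_3+\det D^{(1)}(x)$, $u_2^\sharp=u_3u_1+\det D^{(2)}(x)$, $u_3^\sharp=u_1u_2+\det D^{(3)}(x)$. Let $D^{(k)}_{ij}(x^\sharp)$ be $D^{(k)}_{ij}$ evaluated at the coordinates $x^\sharp_{ij}$ of $\sigma^\sharp$, $D^{(k)}(x,x^\sharp)$ the matrix with rows $(-D^{(k)}_{12}(x),D^{(k)}_{11}(x^\sharp))$, $(-D^{(k)}_{22}(x),D^{(k)}_{21}(x^\sharp))$ and $D^{(k)}(x^\sharp,x)$ the matrix with rows $(-D^{(k)}_{12}(x^\sharp),D^{(k)}_{11}(x))$, $(-D^{(k)}_{22}(x^\sharp),D^{(k)}_{21}(x))$. Let $N_{\mathsf{P}}=\tfrac13\sum_{k=1}^3\big(u_ku_k^\sharp-\det D^{(k)}(x,x^\sharp)-\det D^{(k)}(x^\sharp,x)\big)$ (a cubic form with integer coefficients). $J_{\mathsf{P}}$ is the quadratic Jordan algebra of the cubic form $N_{\mathsf{P}}$ with this $\sharp$-mapping and unit $\mathfrak{1}$ (the point $u_1=u_2=u_3=1$, $x_{ij}=0$): with $T(x,y):=-\partial_x\partial_yN_{\mathsf{P}}(\mathfrak{1})+\partial_xN_{\mathsf{P}}(\mathfrak{1})\partial_yN_{\mathsf{P}}(\mathfrak{1})$, $x\sharp y:=(x+y)^\sharp-x^\sharp-y^\sharp$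 and $U_xy:=T(x,y)x-x^\sharp\sharp y$. $J_{\mathsf{P}}$ is nondegenerate if $\{\sigma\in J\mid U_\sigma y=0\ \forall y\in J\}=\{0\}$. *)

From HB Require Import structures.
From mathcomp Require Import all_boot all_order all_algebra.
From mathcomp Require Import ring.
Set Implicit Arguments. Unset Strict Implicit. Unset Printing Implicit Defensive.
Import Order.TTheory GRing.Theory Num.Theory.
Local Open Scope ring_scope.

(* Indices 1,2 of the paper are encoded as o1 = ord0, o2 = ord_max in 'I_2. *)
Definition o1 : 'I_2 := ord0.
Definition o2 : 'I_2 := ord_max.
Definition j1 : 'I_3 := @Ordinal 3 0 isT.
Definition j2 : 'I_3 := @Ordinal 3 1 isT.
Definition j3 : 'I_3 := @Ordinal 3 2 isT.

(* The coefficient vector P = (p_abc) in k^8: p a b c = p_{abc}. *)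
Definition coeffs (R : Type) := 'I_2 -> 'I_2 -> 'I_2 -> R.

(* Elements of J = k^9: coordinates u1,u2,u3 and the column vectors
   bx_j = (x_{1j}, x_{2j})^t, j = 1,2,3. *)
Record elt (R : Type) := Elt {
  eu1 : R; eu2 : R; eu3 : R;
  ex1 : 'cV[R]_2; ex2 : 'cV[R]_2; ex3 : 'cV[R]_2 }.

Definition xc (R : Type) (s : elt R) (i : 'I_2) (j : 'I_3) : R :=
  match val j with
  | 0 => ex1 s i 0 | 1 => ex2 s i 0 | _ => ex3 s i 0 end.

Section Ops.
Variable R : comRingType.

Definition ezero : elt R := Elt 0 0 0 0 0 0.
Definition eadd (a b : elt R) : elt R :=
  Elt (eu1 a + eu1 b) (eu2 a + eu2 b) (eu3 a + eu3 b)
      (ex1 a + ex1 b) (ex2 a + ex2 b) (ex3 a + ex3 b).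
Definition eopp (a : elt R) : elt R :=
  Elt (- eu1 a) (- eu2 a) (- eu3 a) (- ex1 a) (- ex2 a) (- ex3 a).
Definition escale (c : R) (a : elt R) : elt R :=
  Elt (c * eu1 a) (c * eu2 a) (c * eu3 a) (c *: ex1 a) (c *: ex2 a) (c *: ex3 a).
Definition eone : elt R := Elt 1 1 1 0 0 0.

Variable p : coeffs R.

Definition Dent (k : 'I_3) (s : elt R) (i j : 'I_2) : R :=
  match val k with
  | 0 => p o1 i j * xc s o2 j1 - p o2 i j * xc s o1 j1
  | 1 => p i o1 j * xc s o2 j2 - p i o2 j * xc s o1 j2
  | _ => p i j o1 * xc s o2 j3 - p i j o2 * xc s o1 j3
  end.

Definition Dmix (a b : 'I_2 -> 'I_2 -> R) : 'M[R]_2 :=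
  \matrix_(r < 2, c < 2) if c == o1 then - a r o2 else b r o1.

Definition Dm (k : 'I_3) (s : elt R) : 'M[R]_2 := Dmix (Dent k s) (Dent k s).
Definition Dm2 (k : 'I_3) (s t : elt R) : 'M[R]_2 := Dmix (Dent k s) (Dent k t).

Definition sharp (s : elt R) : elt R :=
  Elt (eu2 s * eu3 s + \det (Dm j1 s))
      (eu3 s * eu1 s + \det (Dm j2 s))
      (eu1 s * eu2 s + \det (Dm j3 s))
      (- (eu1 s *: ex1 s) + Dm j3 s *m ex2 s)
      (- (eu2 s *: ex2 s) + Dm j1 s *m ex3 s)
      (- (eu3 s *: ex3 s) - \adj (Dm j2 s) *m ex1 s).

Definition euk (k : 'I_3) (s : elt R) : R :=
  match val k with 0 => eu1 s | 1 => eu2 s | _ => eu3 s end.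

Definition N3form (s : elt R) : R :=
  \sum_(k < 3) (euk k s * euk k (sharp s)
                 - \det (Dm2 k s (sharp s)) - \det (Dm2 k (sharp s) s)).

(* N_P: the integer-coefficient cubic form with 3 * N_P = N3form
   (see lemma N3formE below); explicit expansion, valid in every
   characteristic. *)
Definition Nform (s : elt R) : R :=
  let u1 := eu1 s in let u2 := eu2 s in let u3 := eu3 s in
  let x11 := xc s o1 j1 in let x21 := xc s o2 j1 in
  let x12 := xc s o1 j2 in let x22 := xc s o2 j2 in
  let x13 := xc s o1 j3 in let x23 := xc s o2 j3 in
  let p111 := p o1 o1 o1 in let p112 := p o1 o1 o2 in
  let p121 := p o1 o2 o1 in let p122 := p o1 o2 o2 in
  let p211 := p o2 o1 o1 in let p212 := p o2 o1 o2 in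
  let p221 := p o2 o2 o1 in let p222 := p o2 o2 o2 in
    2%:R * x21 * x22 * x23 * p112 * p121 * p211
    - x21 * x22 * x23 * p111 * p122 * p211
    - x21 * x22 * x23 * p111 * p121 * p212
    - x21 * x22 * x23 * p111 * p112 * p221
    + x21 * x22 * x23 * p111 * p111 * p222
    - x21 * x22 * x13 * p112 * p122 * p211
    - x21 * x22 * x13 * p112 * p121 * p212
    + x21 * x22 * x13 * p112 * p112 * p221
    + 2%:R * x21 * x22 * x13 * p111 * p122 * p212
    - x21 * x22 * x13 * p111 * p112 * p222
    - x21 * x12 * x23 * p121 * p122 * p211
    + x21 * x12 * x23 * p121 * p121 * p212
    - x21 * x12 * x23 * p112 * p121 * p221
    + 2%:R * x21 * x12 * x23 * p111 * p122 * p221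
    - x21 * x12 * x23 * p111 * p121 * p222
    + x21 * x12 * x13 * p122 * p122 * p211
    - x21 * x12 * x13 * p121 * p122 * p212
    - x21 * x12 * x13 * p112 * p122 * p221
    + 2%:R * x21 * x12 * x13 * p112 * p121 * p222
    - x21 * x12 * x13 * p111 * p122 * p222
    + x11 * x22 * x23 * p122 * p211 * p211
    - x11 * x22 * x23 * p121 * p211 * p212
    - x11 * x22 * x23 * p112 * p211 * p221
    + 2%:R * x11 * x22 * x23 * p111 * p212 * p221
    - x11 * x22 * x23 * p111 * p211 * p222
    - x11 * x22 * x13 * p122 * p211 * p212
    + x11 * x22 * x13 * p121 * p212 * p212
    - x11 * x22 * x13 * p112 * p212 * p221
    + 2%:R * x11 * x22 * x13 * p112 * p211 * p222
    - x11 * x22 * x13 * p111 * p212 * p222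
    - x11 * x12 * x23 * p122 * p211 * p221
    - x11 * x12 * x23 * p121 * p212 * p221
    + 2%:R * x11 * x12 * x23 * p121 * p211 * p222
    + x11 * x12 * x23 * p112 * p221 * p221
    - x11 * x12 * x23 * p111 * p221 * p222
    + 2%:R * x11 * x12 * x13 * p122 * p212 * p221
    - x11 * x12 * x13 * p122 * p211 * p222
    - x11 * x12 * x13 * p121 * p212 * p222
    - x11 * x12 * x13 * p112 * p221 * p222
    + x11 * x12 * x13 * p111 * p222 * p222
    - u3 * x23 * x23 * p121 * p211
    + u3 * x23 * x23 * p111 * p221
    + u3 * x13 * x23 * p122 * p211
    + u3 * x13 * x23 * p121 * p212
    - u3 * x13 * x23 * p112 * p221
    - u3 * x13 * x23 * p111 * p222
    - u3 * x13 * x13 * p122 * p212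
    + u3 * x13 * x13 * p112 * p222
    - u2 * x22 * x22 * p112 * p211
    + u2 * x22 * x22 * p111 * p212
    + u2 * x12 * x22 * p122 * p211
    - u2 * x12 * x22 * p121 * p212
    + u2 * x12 * x22 * p112 * p221
    - u2 * x12 * x22 * p111 * p222
    - u2 * x12 * x12 * p122 * p221
    + u2 * x12 * x12 * p121 * p222
    - u1 * x21 * x21 * p112 * p121
    + u1 * x21 * x21 * p111 * p122
    - u1 * x11 * x21 * p122 * p211
    + u1 * x11 * x21 * p121 * p212
    + u1 * x11 * x21 * p112 * p221
    - u1 * x11 * x21 * p111 * p222
    - u1 * x11 * x11 * p212 * p221
    + u1 * x11 * x11 * p211 * p222
    + u1 * u2 * u3.

End Ops.

Definition map_elt (R S : Type) (f : R -> S) (s : elt R) : elt S :=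
  Elt (f (eu1 s)) (f (eu2 s)) (f (eu3 s))
      (map_mx f (ex1 s)) (map_mx f (ex2 s)) (map_mx f (ex3 s)).

Section Jordan.
Variable k : fieldType.
Variable p : coeffs k.

(* directional derivative  \partial_x N_P(1) = coefficient of t in N_P(1 + t x) *)
Definition dN1 (x : elt k) : k :=
  (Nform (fun a b c => (p a b c)%:P)
     (eadd (eone _) (escale 'X (map_elt polyC x))))`_1.

(* \partial_x \partial_y N_P(1) = coefficient of s t in N_P(1 + s x + t y) *)
Definition ddN1 (x y : elt k) : k :=
  let P2 := fun a b c => ((p a b c)%:P)%:P : {poly {poly k}} in
  let xs := escale ('X%:P) (map_elt (fun c => c%:P%:P) x) in
  let yt := escale 'X (map_elt (fun c => c%:P%:P) y) in
  ((Nform P2 (eadd (eone _) (eadd xs yt)))`_1)`_1.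

Definition Tform (x y : elt k) : k := - ddN1 x y + dN1 x * dN1 y.

Definition sharp2 (x y : elt k) : elt k :=
  eadd (sharp p (eadd x y)) (eopp (eadd (sharp p x) (sharp p y))).

Definition Uop (x y : elt k) : elt k :=
  eadd (escale (Tform x y) x) (eopp (sharp2 (sharp p x) y)).

Definition J_nondegenerate : Prop :=
  forall s : elt k, (forall y : elt k, Uop s y = ezero k) -> s = ezero k.

End Jordan.

Definition hyperdet (R : comRingType) (p : coeffs R) : R :=
  let p111 := p o1 o1 o1 in let p112 := p o1 o1 o2 in
  let p121 := p o1 o2 o1 in let p122 := p o1 o2 o2 in
  let p211 := p o2 o1 o1 in let p212 := p o2 o1 o2 in
  let p221 := p o2 o2 o1 in let p222 := p o2 o2 o2 in
  p111^+2 * p222^+2 + p112^+2 * p221^+2 + p121^+2 * p212^+2 + p122^+2 * p211^+2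
  - 2%:R * (p111 * p122 * p211 * p222 + p111 * p121 * p212 * p222
            + p111 * p112 * p221 * p222 + p121 * p122 * p211 * p212
            + p112 * p122 * p211 * p221 + p112 * p121 * p212 * p221)
  + 4%:R * (p111 * p122 * p212 * p221 + p112 * p121 * p211 * p222).

Lemma det2E (R : comRingType) (A : 'M[R]_2) :
  \det A = A o1 o1 * A o2 o2 - A o1 o2 * A o2 o1.
Proof.
rewrite (expand_det_row _ ord0) !big_ord_recl big_ord0 /cofactor !det_mx11 !mxE /=.
have E1 : lift ord0 (0 : 'I_1) = o2 :> 'I_2 by apply: val_inj.
have E2 : lift ord0 (ord0 : 'I_1) = o2 :> 'I_2 by apply: val_inj.
have E3 : lift o2 (0 : 'I_1) = o1 :> 'I_2 by apply: val_inj.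
rewrite E1 E3 /= expr0 expr1 mul1r mulN1r addr0.
by rewrite -/o1 mulrN.
Qed.

Lemma adj2E (R : comRingType) (A : 'M[R]_2) :
  \adj A = \matrix_(i < 2, j < 2)
     (if i == o1 then (if j == o1 then A o2 o2 else - A o1 o2)
      else (if j == o1 then - A o2 o1 else A o1 o1)).
Proof.
apply/matrixP => i j; rewrite !mxE /cofactor det_mx11 !mxE.
case: i => [[|[|//]] Hi]; case: j => [[|[|//]] Hj] /=;
  rewrite ?expr0 ?expr1 ?exprS ?expr0 ?mul1r ?mulN1r ?mulrN1 ?opprK;
  rewrite ?mul1r; try congr (- _);
  by congr (A _ _); apply: val_inj.
Qed.

Lemma N3formE (R : comRingType) (p : coeffs R) (s : elt R) :
  3%:R * Nform p s = N3form p s.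
Proof.
case: s => u1 u2 u3 v1 v2 v3.
have n21 : (o2 == o1) = false by [].
have L : lift ord0 (ord0 : 'I_1) = o2 :> 'I_2 by apply: val_inj.
have L0 : (ord0 : 'I_2) = o1 by [].
rewrite /N3form !big_ord_recl big_ord0.
rewrite /Nform /sharp /Dm2 /Dm /Dmix /euk /Dent /xc /= !det2E !adj2E.
rewrite ?mxE /= ?eqxx ?n21 /=.
rewrite ?mxE ?big_ord_recl ?big_ord0 /= ?L ?L0 ?mxE.
rewrite ?eqxx ?n21 /=.
rewrite /o1 /o2; ring.
Qed.

From HB Require Import structures.
From mathcomp Require Import all_boot all_order all_algebra.
From mathcomp Require Import ring.
Set Implicit Arguments. Unset Strict Implicit. Unset Printing Implicit Defensive.
Import GRing.Theory.
Local Open Scope ring_scope.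

(* Slicing P in direction k gives two 2x2 matrices A, B and the
   binary quadratic form q_k(x, z) = det(z A - x B), which is det D^(k) as a
   function of the k-th column of an element; Cayley's hyperdeterminant is the
   discriminant of each q_k.  Expanding N_P along lines shows that the trace form
   is T(x, y) = T(x) T(y) - T(x # y), which makes U_x y = T(x, y) x - x^# # y
   explicit.  If U_s = 0, evaluating at the three diagonal idempotents kills the
   diagonal coordinates of s and s^#; then U_s y = T(s, y) s, so s = 0 or
   T(s, -) = 0, and the latter says that every column of s lies in the radical
   of the corresponding q_k, which is trivial when D_H(P) <> 0.  Conversely, if
   D_H(P) = 0, a nonzero isotropic vector of the radical of q_1 (it exists over
   an algebraically closed field) is a column element s with s^# = 0 and
   T(s, -) = 0, hence U_s = 0. *)

(* Keeping [xc] opaque to [simpl] makes every coordinate computation below end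
   in a polynomial in the atoms [eu_ s], [xc s i j] and [p a b c]. *)
Arguments xc : simpl never.

Lemma ord2_cases (i : 'I_2) : i = o1 \/ i = o2.
Proof. by case: i => [[|[|//]] Hi]; [left | right]; apply: val_inj. Qed.

Lemma ord3_cases (j : 'I_3) : [\/ j = j1, j = j2 | j = j3].
Proof.
by case: j => [[|[|[|//]]] ?]; [constructor 1 | constructor 2 | constructor 3]; apply: val_inj.
Qed.

Lemma elt_coord_eq (R : Type) (s t : elt R) :
  eu1 s = eu1 t -> eu2 s = eu2 t -> eu3 s = eu3 t ->
  (forall i, xc s i j1 = xc t i j1) -> (forall i, xc s i j2 = xc t i j2) ->
  (forall i, xc s i j3 = xc t i j3) -> s = t.
Proof.
case: s => u1 u2 u3 v1 v2 v3; case: t => w1 w2 w3 y1 y2 y3 /= -> -> -> E1 E2 E3.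
by congr Elt; apply/matrixP => i o; rewrite (ord1 o); [apply: E1 | apply: E2 | apply: E3].
Qed.

Section Coordinates.
Variable R : comNzRingType.
Implicit Types (s t : elt R) (p : coeffs R).

Lemma xc_add s t i j : xc (eadd s t) i j = xc s i j + xc t i j.
Proof. by rewrite /xc; case: (val j) => [|[|?]] /=; rewrite mxE. Qed.

Lemma xc_opp s i j : xc (eopp s) i j = - xc s i j.
Proof. by rewrite /xc; case: (val j) => [|[|?]] /=; rewrite mxE. Qed.

Lemma xc_scale c s i j : xc (escale c s) i j = c * xc s i j.
Proof. by rewrite /xc; case: (val j) => [|[|?]] /=; rewrite mxE. Qed.

Lemma xc_one i j : xc (eone R) i j = 0.
Proof. by rewrite /xc; case: (val j) => [|[|?]] /=; rewrite mxE. Qed.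

Lemma xc_zero i j : xc (ezero R) i j = 0.
Proof. by rewrite /xc; case: (val j) => [|[|?]] /=; rewrite mxE. Qed.

Lemma mulmx_col2 (A : 'M[R]_2) (v : 'cV[R]_2) i :
  (A *m v) i 0 = A i o1 * v o1 0 + A i o2 * v o2 0.
Proof.
rewrite mxE !big_ord_recl big_ord0 addr0.
by have -> : lift ord0 ord0 = o2 :> 'I_2 by apply: val_inj.
Qed.

Lemma Dmix1 (a b : 'I_2 -> 'I_2 -> R) i : Dmix a b i o1 = - a i o2.
Proof. by rewrite mxE eqxx. Qed.

Lemma Dmix2 (a b : 'I_2 -> 'I_2 -> R) i : Dmix a b i o2 = b i o1.
Proof. by rewrite mxE. Qed.

Lemma Dent1 p s i j : Dent p j1 s i j = p o1 i j * xc s o2 j1 - p o2 i j * xc s o1 j1.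
Proof. by []. Qed.

Lemma Dent2 p s i j : Dent p j2 s i j = p i o1 j * xc s o2 j2 - p i o2 j * xc s o1 j2.
Proof. by []. Qed.

Lemma Dent3 p s i j : Dent p j3 s i j = p i j o1 * xc s o2 j3 - p i j o2 * xc s o1 j3.
Proof. by []. Qed.

Lemma det_Dm2 p k s t : \det (Dm2 p k s t) =
  Dent p k s o2 o2 * Dent p k t o1 o1 - Dent p k s o1 o2 * Dent p k t o2 o1.
Proof. by rewrite det2E /Dm2 !Dmix1 !Dmix2; ring. Qed.

Lemma xc_sharp1 p s i : xc (sharp p s) i j1 =
  - (eu1 s * xc s i j1) - Dent p j3 s i o2 * xc s o1 j2 + Dent p j3 s i o1 * xc s o2 j2.
Proof. by rewrite {1}/xc /= mxE mulmx_col2 /Dm Dmix1 Dmix2 !mxE /xc /=; ring. Qed.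

Lemma xc_sharp2 p s i : xc (sharp p s) i j2 =
  - (eu2 s * xc s i j2) - Dent p j1 s i o2 * xc s o1 j3 + Dent p j1 s i o1 * xc s o2 j3.
Proof. by rewrite {1}/xc /= mxE mulmx_col2 /Dm Dmix1 Dmix2 !mxE /xc /=; ring. Qed.

Lemma xc_sharp3 p s i : xc (sharp p s) i j3 =
  - (eu3 s * xc s i j3) - (Dent p j2 s o2 i * xc s o1 j1 - Dent p j2 s o1 i * xc s o2 j1).
Proof.
rewrite {1}/xc /= mxE [X in _ + X]mxE mulmx_col2 adj2E !mxE /Dm.
by case: (ord2_cases i) => ->; rewrite /= ?Dmix1 ?Dmix2 /xc /=; ring.
Qed.
End Coordinates.

Ltac coord_simpl :=
  rewrite ?det_Dm2 ?(Dent1, Dent2, Dent3) ?(xc_sharp1, xc_sharp2, xc_sharp3)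
          ?(xc_add, xc_opp, xc_scale, xc_one, xc_zero).

Ltac coord_ring := repeat progress (rewrite /=; coord_simpl); rewrite /xc /= ?mxE /=; ring.

Ltac elt_ring := apply: elt_coord_eq => *; coord_ring.

Lemma eaddA (R : comNzRingType) (a b c : elt R) : eadd a (eadd b c) = eadd (eadd a b) c.
Proof. by rewrite /eadd /= !addrA. Qed.

Section TraceForms.
Variables (R : comNzRingType) (p : coeffs R).
Implicit Types (s t : elt R).

Definition etr s := eu1 s + eu2 s + eu3 s.

(* T(s # t), written as a bilinear form: the two mixed determinants of
   D^(k)(s, t) polarize det D^(k). *)
Definition tsharp s t :=
  eu2 s * eu3 t + eu3 s * eu2 t + eu3 s * eu1 t + eu1 s * eu3 t + eu1 s * eu2 t + eu2 s * eu1 t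
  + \det (Dm2 p j1 s t) + \det (Dm2 p j1 t s) + \det (Dm2 p j2 s t) + \det (Dm2 p j2 t s)
  + \det (Dm2 p j3 s t) + \det (Dm2 p j3 t s).

Definition tbil s t := etr s * etr t - tsharp s t.

Lemma Nform_one : Nform p (eone R) = 1.
Proof. by rewrite /Nform; coord_ring. Qed.

Lemma Nform_add_scale s t (c : R) :
  Nform p (eadd s (escale c t)) =
  Nform p s + c * tbil (sharp p s) t + c ^+ 2 * tbil s (sharp p t) + c ^+ 3 * Nform p t.
Proof. by rewrite /tbil /tsharp /etr /Nform; coord_simpl; coord_ring. Qed.

Lemma tbil_sharp_one t : tbil (sharp p (eone R)) t = etr t.
Proof. by rewrite /tbil /tsharp /etr; coord_ring. Qed.

Lemma tbil_sharp_one_add_scale s t (c : R) :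
  tbil (sharp p (eadd (eone R) (escale c s))) t =
  etr t + c * tsharp s t + c ^+ 2 * tbil (sharp p s) t.
Proof. by rewrite /tbil /tsharp /etr; coord_ring. Qed.
End TraceForms.

Lemma map_elt_comp (R S T : Type) (f : R -> S) (g : S -> T) (s : elt R) :
  map_elt (fun c => g (f c)) s = map_elt g (map_elt f s).
Proof. by rewrite /map_elt /= -!(map_mx_comp f g). Qed.

Section Morphism.
Variables (R S : comNzRingType) (f : {rmorphism R -> S}) (p : coeffs R).
Implicit Types (s t : elt R).
Local Notation fp := (fun a b c => f (p a b c)).

Lemma xc_map s i j : xc (map_elt f s) i j = f (xc s i j).
Proof. by rewrite /xc; case: (val j) => [|[|?]] /=; rewrite mxE. Qed.

Lemma map_elt_add s t : map_elt f (eadd s t) = eadd (map_elt f s) (map_elt f t).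
Proof. by rewrite /map_elt /= !rmorphD !map_mxD. Qed.

Lemma map_elt_scale c s : map_elt f (escale c s) = escale (f c) (map_elt f s).
Proof. by rewrite /map_elt /= !rmorphM !map_mxZ. Qed.

Lemma map_elt_one : map_elt f (eone R) = eone S.
Proof. by rewrite /map_elt /= rmorph1 map_mx0. Qed.

Lemma Dm_map k s : Dm fp k (map_elt f s) = map_mx f (Dm p k s).
Proof.
apply/matrixP => i j; rewrite !mxE; case: ifP => _; rewrite ?rmorphN;
  by case: (ord3_cases k) => ->; rewrite /Dent /= !xc_map rmorphB !rmorphM.
Qed.

Lemma sharp_map s : sharp fp (map_elt f s) = map_elt f (sharp p s).
Proof.
rewrite /sharp /map_elt /= !Dm_map !det_map_mx !rmorphD !rmorphM.
by rewrite !map_mxD !map_mxN ?map_mxB !map_mxZ !map_mxM map_mx_adj.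
Qed.

Lemma Nform_map s : Nform fp (map_elt f s) = f (Nform p s).
Proof. by rewrite /Nform /= !xc_map; ring. Qed.

Lemma etr_map s : etr (map_elt f s) = f (etr s).
Proof. by rewrite /etr /= !rmorphD. Qed.

Lemma tsharp_map s t : tsharp fp (map_elt f s) (map_elt f t) = f (tsharp p s t).
Proof. by rewrite /tsharp /= !det_Dm2 /Dent /= !xc_map; ring. Qed.

Lemma tbil_map s t : tbil fp (map_elt f s) (map_elt f t) = f (tbil p s t).
Proof. by rewrite /tbil !etr_map tsharp_map -rmorphM -rmorphB. Qed.
End Morphism.

Section Derivatives.
Variables (k : fieldType) (p : coeffs k).

Lemma dN1E x : dN1 p x = etr x.
Proof.
rewrite /dN1 Nform_add_scale Nform_one tbil_sharp_one etr_map.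
by rewrite !coefD coefXM !coefXnM coef1 coefC /= add0r !addr0.
Qed.

(* In [{poly {poly k}}] the outer variable is t = 'X and the inner one is
   s = 'X%:P; expand N_P(1 + s x + t y) first along t, then along s. *)
Lemma ddN1E x y : ddN1 p x y = tsharp p x y.
Proof.
rewrite /ddN1 eaddA Nform_add_scale !(map_elt_comp (@polyC k) (@polyC {poly k})).
have -> : eadd (eone _) (escale 'X%:P (map_elt polyC (map_elt polyC x))) =
          map_elt polyC (eadd (eone _) (escale 'X (map_elt polyC x))).
  by rewrite map_elt_add map_elt_scale map_elt_one.
rewrite sharp_map Nform_map tbil_map !coefD coefXM !coefXnM !coefC /=.
rewrite tbil_sharp_one_add_scale etr_map tsharp_map !coefD coefXM coefXnM !coefC /=.
by rewrite !add0r !addr0.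
Qed.

Lemma TformE x y : Tform p x y = tbil p x y.
Proof. by rewrite /Tform ddN1E !dN1E /tbil addrC. Qed.
End Derivatives.

Record binform (R : Type) := BinForm { bf_a : R; bf_b : R; bf_c : R }.

Section BinaryForms.
Variable R : comNzRingType.
Implicit Types (q : binform R) (x z y w : R).

Definition bf_eval q x z := bf_a q * x ^+ 2 + bf_b q * x * z + bf_c q * z ^+ 2.

Definition bf_polar q x z y w :=
  (2%:R * bf_a q * x + bf_b q * z) * y + (bf_b q * x + 2%:R * bf_c q * z) * w.

Definition bf_disc q := bf_b q ^+ 2 - 4%:R * bf_a q * bf_c q.

Lemma bf_polar0l q y w : bf_polar q 0 0 y w = 0.
Proof. by rewrite /bf_polar; ring. Qed.

Lemma bf_polar0r q x z : bf_polar q x z 0 0 = 0.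
Proof. by rewrite /bf_polar; ring. Qed.
End BinaryForms.

Lemma bf_polar_eq0 (F : fieldType) (q : binform F) x z :
  bf_disc q != 0 -> (forall y w, bf_polar q x z y w = 0) -> x = 0 /\ z = 0.
Proof.
move=> dq P; have gx := P 1 0; have gz := P 0 1.
rewrite /bf_polar !mulr1 !mulr0 ?addr0 ?add0r in gx gz.
have cancel_disc v : bf_disc q * v = 0 -> v = 0.
  by move/eqP; rewrite mulf_eq0 (negbTE dq) => /eqP.
split; apply: cancel_disc.
- have -> : bf_disc q * x = bf_b q * (bf_b q * x + 2%:R * bf_c q * z)
                          - 2%:R * bf_c q * (2%:R * bf_a q * x + bf_b q * z).
    by rewrite /bf_disc; ring.
  by rewrite gx gz; ring.
- have -> : bf_disc q * z = bf_b q * (2%:R * bf_a q * x + bf_b q * z)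
                          - 2%:R * bf_a q * (bf_b q * x + 2%:R * bf_c q * z).
    by rewrite /bf_disc; ring.
  by rewrite gx gz; ring.
Qed.

Lemma bf_singular (F : closedFieldType) (q : binform F) : bf_disc q = 0 ->
  exists x z, [/\ x != 0 \/ z != 0, bf_eval q x z = 0 & forall y w, bf_polar q x z y w = 0].
Proof.
case: q => a b c; rewrite /bf_disc /bf_eval /bf_polar /= => D.
have sq0 (v : F) : v ^+ 2 = 0 -> v = 0 by move/eqP; rewrite expf_eq0 => /andP [_ /eqP].
have [a0 | a0] := eqVneq a 0.
  have b0 : b = 0 by apply: sq0; rewrite -D a0; ring.
  by exists 1, 0; rewrite a0 b0; split=> [|| y w]; [left; exact: oner_neq0 | ring | ring].
have [r Hr] := @solve_monicpoly F 2 (nth 0 [:: - c / a; - b / a]) isT.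
rewrite !big_ord_recl big_ord0 /= expr0 expr1 mulr1 addr0 in Hr.
have root_r : a * r ^+ 2 + b * r + c = 0 by rewrite Hr; field.
have grad_r : 2%:R * a * r + b = 0.
  apply: sq0; have -> : (2%:R * a * r + b) ^+ 2 =
                        4%:R * a * (a * r ^+ 2 + b * r + c) + (b ^+ 2 - 4%:R * a * c) by ring.
  by rewrite root_r D; ring.
exists r, 1; split=> [|| y w].
- by right; exact: oner_neq0.
- by rewrite -root_r; ring.
- have -> : b * r + 2%:R * c * 1 = 2%:R * (a * r ^+ 2 + b * r + c) - r * (2%:R * a * r + b).
    by ring.
  by rewrite mulr1 root_r grad_r; ring.
Qed.

Section Slices.
Variable R : comNzRingType.
Implicit Types (p : coeffs R) (s y : elt R).

Definition pslice p (k : 'I_3) (c i j : 'I_2) : R :=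
  match val k with 0 => p c i j | 1 => p i c j | _ => p i j c end.

(* With A = pslice p k o1 and B = pslice p k o2, the form (x, z) |-> det(z A - x B);
   [Dent p k s] is the matrix z A - x B at the k-th column (x, z) of s. *)
Definition slice_form p (k : 'I_3) : binform R :=
  let A := pslice p k o1 in let B := pslice p k o2 in
  BinForm (B o1 o1 * B o2 o2 - B o1 o2 * B o2 o1)
          (A o1 o2 * B o2 o1 + B o1 o2 * A o2 o1 - A o1 o1 * B o2 o2 - B o1 o1 * A o2 o2)
          (A o1 o1 * A o2 o2 - A o1 o2 * A o2 o1).

Lemma bf_disc_slice p k : bf_disc (slice_form p k) = hyperdet p.
Proof. by case: (ord3_cases k) => ->; rewrite /bf_disc /slice_form /pslice /hyperdet /=; ring. Qed.

Definition ecol (k : 'I_3) (x z : R) : elt R :=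
  let w := \col_i (if i == o1 then x else z) in
  match val k with 0 => Elt 0 0 0 w 0 0 | 1 => Elt 0 0 0 0 w 0 | _ => Elt 0 0 0 0 0 w end.

Lemma sharp_ecol1 p x z : sharp p (ecol j1 x z) = Elt (bf_eval (slice_form p j1) x z) 0 0 0 0 0.
Proof. by rewrite /bf_eval /slice_form /pslice /ecol /=; elt_ring. Qed.

Lemma tbil_offdiag p s y : eu1 s = 0 -> eu2 s = 0 -> eu3 s = 0 ->
  tbil p s y = - (bf_polar (slice_form p j1) (xc s o1 j1) (xc s o2 j1) (xc y o1 j1) (xc y o2 j1)
                + bf_polar (slice_form p j2) (xc s o1 j2) (xc s o2 j2) (xc y o1 j2) (xc y o2 j2)
                + bf_polar (slice_form p j3) (xc s o1 j3) (xc s o2 j3) (xc y o1 j3) (xc y o2 j3)).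
Proof.
case: s => u1 u2 u3 v1 v2 v3 /= -> -> ->.
by rewrite /tbil /tsharp /etr /bf_polar /slice_form /pslice /=; coord_ring.
Qed.
End Slices.

Section UOperator.
Variables (k : fieldType) (p : coeffs k).
Implicit Types (s c y : elt k).

Definition idem1 : elt k := Elt 1 0 0 0 0 0.
Definition idem2 : elt k := Elt 0 1 0 0 0 0.
Definition idem3 : elt k := Elt 0 0 1 0 0 0.

Lemma sharp2_idem1 c : sharp2 p c idem1 = Elt 0 (eu3 c) (eu2 c) (- ex1 c) 0 0.
Proof. by rewrite /sharp2; elt_ring. Qed.

Lemma sharp2_idem2 c : sharp2 p c idem2 = Elt (eu3 c) 0 (eu1 c) 0 (- ex2 c) 0.
Proof. by rewrite /sharp2; elt_ring. Qed.

Lemma sharp2_idem3 c : sharp2 p c idem3 = Elt (eu2 c) (eu1 c) 0 0 0 (- ex3 c).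
Proof. by rewrite /sharp2; elt_ring. Qed.

Lemma Tform_idem1 s : Tform p s idem1 = eu1 s.
Proof. by rewrite TformE /tbil /tsharp /etr; coord_ring. Qed.

Lemma Tform_idem2 s : Tform p s idem2 = eu2 s.
Proof. by rewrite TformE /tbil /tsharp /etr; coord_ring. Qed.

Lemma Tform_idem3 s : Tform p s idem3 = eu3 s.
Proof. by rewrite TformE /tbil /tsharp /etr; coord_ring. Qed.

Lemma sharp2_0l y : sharp2 p (ezero k) y = ezero k.
Proof. by rewrite /sharp2; elt_ring. Qed.

Lemma escale0 s : escale 0 s = ezero k.
Proof. by case: s => *; rewrite /escale /= !mul0r !scale0r. Qed.

Lemma escale_eq0 a s : escale a s = ezero k -> a = 0 \/ s = ezero k.
Proof.
case: s => u1 u2 u3 v1 v2 v3 [] /eqP + /eqP + /eqP + /eqP + /eqP + /eqP.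
rewrite !mulf_eq0 !scaler_eq0; case: (a =P 0) => [-> | _] /=; first by left.
by move=> /eqP-> /eqP-> /eqP-> /eqP-> /eqP-> /eqP->; right.
Qed.

Lemma Uop_sharp0 s y : sharp p s = ezero k -> Uop p s y = escale (Tform p s y) s.
Proof.
move=> s0; rewrite /Uop s0 sharp2_0l.
by case: (escale _ s) => *; rewrite /eadd /= !oppr0 !addr0.
Qed.

Lemma abs_zero_divisor_diag s : (forall y, Uop p s y = ezero k) ->
  [/\ eu1 s = 0, eu2 s = 0, eu3 s = 0 & sharp p s = ezero k].
Proof.
move=> U; move: (U idem1) (U idem2) (U idem3).
rewrite /Uop Tform_idem1 Tform_idem2 Tform_idem3 sharp2_idem1 sharp2_idem2 sharp2_idem3.
case: (sharp p s) => c1 c2 c3 w1 w2 w3; case: s {U} => u1 u2 u3 v1 v2 v3 /=.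
move=> [E11 E12 E13 F11 _ _] [_ E22 E23 _ F22 _] [_ _ E33 _ _ F33].
have sq0 (u : k) : u * u + - 0 = 0 -> u = 0.
  by rewrite oppr0 addr0 => /eqP; rewrite mulf_eq0 orbb => /eqP.
move: (sq0 _ E11) (sq0 _ E22) (sq0 _ E33) => u1_0 u2_0 u3_0; subst u1 u2 u3.
move: E12 E13 E23 F11 F22 F33; rewrite !mul0r !scale0r !add0r !opprK.
move=> /eqP; rewrite oppr_eq0 => /eqP -> /eqP; rewrite oppr_eq0 => /eqP ->.
move=> /eqP; rewrite oppr_eq0 => /eqP -> -> -> ->.
by split.
Qed.
End UOperator.

Lemma hyperdet_neq0_nondegenerate (k : fieldType) (p : coeffs k) :
  hyperdet p != 0 -> J_nondegenerate p.
Proof.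
move=> hd s U; have [u1 u2 u3 s0] := abs_zero_divisor_diag U.
have polar0 j x z : bf_polar (slice_form p j) (xc s o1 j) (xc s o2 j) x z = 0.
  have := U (ecol j x z); rewrite Uop_sharp0 // => /escale_eq0 [|->]; last first.
    by rewrite !xc_zero bf_polar0l.
  rewrite TformE tbil_offdiag //.
  case: (ord3_cases j) => ->; rewrite /xc /= !mxE /= !bf_polar0r ?addr0 ?add0r;
    by move/eqP; rewrite oppr_eq0 => /eqP.
have col0 j i : xc s i j = 0.
  have dq : bf_disc (slice_form p j) != 0 by rewrite bf_disc_slice.
  have [x0 z0] := bf_polar_eq0 dq (polar0 j).
  by case: (ord2_cases i) => ->.
by apply: elt_coord_eq => //= i; rewrite col0 xc_zero.
Qed.

Lemma hyperdet_eq0_degenerate (k : closedFieldType) (p : coeffs k) :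
  hyperdet p = 0 -> ~ J_nondegenerate p.
Proof.
move=> hd ND.
have [x [z [nz q0 pol]]] := bf_singular (etrans (bf_disc_slice p j1) hd).
have s0 : sharp p (ecol j1 x z) = ezero k by rewrite sharp_ecol1 q0.
have T0 y : Tform p (ecol j1 x z) y = 0.
  by rewrite TformE tbil_offdiag //; rewrite /xc /= !mxE /= !bf_polar0l pol; ring.
have U0 y : Uop p (ecol j1 x z) y = ezero k by rewrite Uop_sharp0 // T0 escale0.
have /(congr1 (fun t => (xc t o1 j1, xc t o2 j1))) := ND _ U0.
rewrite !xc_zero /xc /= !mxE /= => -[x0 z0].
by case: nz; rewrite ?x0 ?z0 eqxx.
Qed.

Theorem corollary4p7 (k : closedFieldType) (p : coeffs k) :
  J_nondegenerate p <-> hyperdet p != 0.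
Proof.
split=> [ND | ]; last exact: hyperdet_neq0_nondegenerate.
by apply/eqP => hd; exact: hyperdet_eq0_degenerate hd ND.
Qed.
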